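(* Let $X$ be an infinite set. No topological extension ${}^{*}X$ of $X$ satisfies simultaneously the three principles Ind, Poss and Tran.
   Context: A topological extension of a set $X$ is a $T_1$ topological space ${}^{*}X$ containing $X$ as a discrete dense subspace, together with an assignment to each function $f:X\to X$ of a continuous map ${}^{*}f:{}^{*}X\to{}^{*}X$ extending $f$, such that (c) ${}^{*}g\circ{}^{*}f={}^{*}(g\circ f)$ for all $f,g:X\to X$, and (i) if $f(x)=x$ for all $x\in A\subseteq X$, then ${}^{*}f(\xi)=\xi$ for all $\xi$ in the closure of $A$ in ${}^{*}X$. For $A\subseteq X$ write ${}^{*}A$ for the closure of $A$ in ${}^{*}X$. Principle Ind: for any two distinct $\xi,\eta\in{}^{*}X$ there is $A\subseteq X$ with $\xi\in{}^{*}A$ and $\eta\notin{}^{*}A$. Principle Poss: for every family $\mathcal F$ of subsets of $X$, if $\bigcap_{A\in\mathcal F}{}^{*}A=\emptyset$, then there are finitely many $A_1,\dots,A_n\in\mathcal F$ with $A_1\cap\dots\cap A_n=\emptyset$. Principle Tran: let $L$ be the first-order language having a constant symbol for each element of $X$, an $n$-ary relation symbol for each $R\subseteq X^n$ and an $n$-ary function symbol for each $F:X^n\to X$ ($n\ge1$), and regard $X$ as an $L$-structure in the obvious way. ${}^{*}X$ satisfies Tran if ${}^{*}X$ can be made into an $L$-structure in which each constant $x$ denotes $x$, each unary function symbol $f$ denotes ${}^{*}f$ and each unary relation symbol $A$ denotes ${}^{*}A$, such that for every $L$-sentence $\sigma$, $\sigma$ holds in $X$ if and only if $\sigma$ holds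 in ${}^{*}X$. *)

From HB Require Import structures.
From mathcomp Require Import all_boot all_order.
From mathcomp Require Import boolp classical_sets functions cardinality.
From mathcomp Require Import topology.

Set Implicit Arguments.
Unset Strict Implicit.
Unset Printing Implicit Defensive.

Local Open Scope classical_set_scope.

Definition starset (X : Type) (S : topologicalType) (e : X -> S) (A : set X)
  : set S := closure (e @` A).

Definition topological_extension (X : Type) (S : topologicalType)
    (e : X -> S) (star : (X -> X) -> (S -> S)) : Prop :=
  @accessible_space S /\
  injective e /\
  [/\
      (forall x : X, exists U : set S,
          open U /\ U `&` range e = [set e x]),
      dense (range e),
      (forall f : X -> X, continuous (star f)
                          /\ (forall x, star f (e x) = e (f x))),
      (forall f g : X -> X, star g \o star f = star (g \o f))
    & (forall (f : X -> X) (A : set X),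
          (forall x, A x -> f x = x) ->
          forall xi, starset e A xi -> star f xi = xi)].

Definition principle_Ind (X : Type) (S : topologicalType) (e : X -> S) : Prop :=
  forall xi eta : S, xi <> eta ->
    exists A : set X, starset e A xi /\ ~ starset e A eta.

Definition principle_Poss (X : Type) (S : topologicalType) (e : X -> S) : Prop :=
  forall F : set (set X),
    \bigcap_(A in F) starset e A = set0 ->
    exists G : set (set X),
      [/\ G `<=` F, finite_set G & \bigcap_(A in G) A = set0].

(* n.+1-ary function symbols are the functions F : X^(n+1) -> X, n.+1-ary
   relation symbols are the relations R ⊆ X^(n+1) (X^(n+1) rendered as
   'I_n.+1 -> X); constant symbols are the elements of X. *)

Inductive term (X : Type) : Type :=
  | TVar : nat -> term X
  | TConst : X -> term X
  | TApp : forall n : nat, ((('I_n.+1) -> X) -> X) -> ('I_n.+1 -> term X) -> term X.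

Inductive formula (X : Type) : Type :=
  | FEq : term X -> term X -> formula X
  | FRel : forall n : nat, set ('I_n.+1 -> X) -> ('I_n.+1 -> term X) -> formula X
  | FNot : formula X -> formula X
  | FAnd : formula X -> formula X -> formula X
  | FOr : formula X -> formula X -> formula X
  | FImp : formula X -> formula X -> formula X
  | FAll : nat -> formula X -> formula X
  | FEx : nat -> formula X -> formula X.

Fixpoint occurs (X : Type) (k : nat) (t : term X) : Prop :=
  match t with
  | TVar i => i = k
  | TConst _ => False
  | TApp n _ a => exists i : 'I_n.+1, occurs k (a i)
  end.

Fixpoint free_in (X : Type) (k : nat) (phi : formula X) : Prop :=
  match phi with
  | FEq t u => occurs k t \/ occurs k u
  | FRel n _ a => exists i : 'I_n.+1, occurs k (a i)
  | FNot p => free_in k p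
  | FAnd p q | FOr p q | FImp p q => free_in k p \/ free_in k q
  | FAll i p | FEx i p => i <> k /\ free_in k p
  end.

Definition sentence (X : Type) (phi : formula X) : Prop :=
  forall k, ~ free_in k phi.

Record Lstruct (X D : Type) := {
  Lconst : X -> D;
  Lfun : forall n : nat, ((('I_n.+1) -> X) -> X) -> ('I_n.+1 -> D) -> D;
  Lrel : forall n : nat, set ('I_n.+1 -> X) -> set ('I_n.+1 -> D) }.

Section Semantics.
Variables (X D : Type) (M : Lstruct X D).

Fixpoint eval (v : nat -> D) (t : term X) : D :=
  match t with
  | TVar i => v i
  | TConst x => Lconst M x
  | TApp n F a => Lfun M F (fun i => eval v (a i))
  end.

Definition upd (v : nat -> D) (k : nat) (d : D) : nat -> D :=
  fun i => if i == k then d else v i.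

Fixpoint sat (v : nat -> D) (phi : formula X) : Prop :=
  match phi with
  | FEq t u => eval v t = eval v u
  | FRel n R a => Lrel M R (fun i => eval v (a i))
  | FNot p => ~ sat v p
  | FAnd p q => sat v p /\ sat v q
  | FOr p q => sat v p \/ sat v q
  | FImp p q => sat v p -> sat v q
  | FAll k p => forall d : D, sat (upd v k d) p
  | FEx k p => exists d : D, sat (upd v k d) p
  end.

Definition holds (phi : formula X) : Prop := forall v : nat -> D, sat v phi.

End Semantics.

Definition standard_struct (X : Type) : Lstruct X X :=
  {| Lconst := id;
     Lfun := fun n F a => F a;
     Lrel := fun n R a => R a |}.

Definition principle_Tran (X : Type) (S : topologicalType) (e : X -> S)
    (star : (X -> X) -> (S -> S)) : Prop :=
  exists M : Lstruct X S,
    [/\ (forall x : X, Lconst M x = e x),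
        (forall (F : ('I_1 -> X) -> X) (s : S),
            Lfun M F (fun _ => s) = star (fun x => F (fun _ => x)) s),
        (forall (R : set ('I_1 -> X)) (s : S),
            Lrel M R (fun _ => s) <-> starset e (fun x => R (fun _ => x)) s)
      & (forall sigma : formula X, sentence sigma ->
            (holds (standard_struct X) sigma <-> holds M sigma))].

From mathcomp Require Import all_boot all_order.
From mathcomp Require Import boolp classical_sets functions cardinality.
From mathcomp Require Import topology.

(* Tran transfers to the starred sets the first-order facts behind
   intersections, images, covers and joint injectivity of two maps.  By Poss
   the cofinite subsets of a countable N ⊆ X have a common starred point xi,
   and the sets A with xi ∈ *A form a nonprincipal ultrafilter.  Coding the
   pairs of N inside X, Poss yields points z< and z> lying, for every such A,
   in the starred sets of the pairs (m, n) of A with m < n, resp. m > n.  By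
   Ind, both coordinate projections send z< and z> to xi; joint injectivity
   then forces z< = z>, although the two starred sets of pairs are disjoint.
   Only the three principles are used, not the axioms of an extension. *)

Local Open Scope classical_set_scope.

Lemma infinite_countable_inj {X : Type} {T : countType} :
  infinite_set [set: X] -> exists f : T -> X, injective f.
Proof.
elim/Ppointed: X => X; first by rewrite emptyE => /(_ (finite_set0 _)).
move=> /infiniteP/pcard_injP[io ioI].
by exists (io \o pickle) => a b /(ioI _ _ (in_setT _) (in_setT _))/(pcan_inj pickleK).
Qed.

Lemma directed_bigcap_seq {T} {F : set (set T)} {B0 : set T} :
  F B0 -> (forall B1 B2, F B1 -> F B2 -> exists2 B, F B & B `<=` B1 `&` B2) ->
  forall s : seq (set T), [set` s] `<=` F ->
  exists2 B, F B & B `<=` \bigcap_(A in [set` s]) A.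
Proof.
move=> FB0 Fdir; elim=> [|A s IHs] sF; first by exists B0.
have [|B1 FB1 B1s] := IHs; first by move=> B sB; apply: sF; rewrite /= in_cons sB orbT.
have [B FB BAB1] := Fdir A B1 (sF A (mem_head _ _)) FB1.
exists B => // x /BAB1[Ax B1x] C /=; rewrite in_cons => /orP[/eqP -> //|Cs].
exact: B1s.
Qed.

Lemma starset_set0 {X : Type} {S : topologicalType} (e : X -> S) (s : S) :
  ~ starset e set0 s.
Proof. by rewrite /starset image_set0 closure0. Qed.

Lemma starset_neq0 {X : Type} {S : topologicalType} {e : X -> S} {A : set X} {s : S} :
  starset e A s -> A !=set0.
Proof. by move=> As; apply/set0P; apply: contraPneq As => ->; apply: starset_set0. Qed.

Section Possibility.
Context {X : Type} {S : topologicalType} {e : X -> S}.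
Hypothesis Poss : principle_Poss e.

Lemma Poss_common_point {F : set (set X)} {B0 : set X} :
  F B0 -> (forall B1 B2, F B1 -> F B2 -> exists2 B, F B & B `<=` B1 `&` B2) ->
  (forall B, F B -> B !=set0) -> exists s, forall B, F B -> starset e B s.
Proof.
move=> FB0 Fdir Fneq0; apply: contrapT => noF.
have [G [GF /finite_seqP[s Gs] G0]] : exists G, [/\ G `<=` F, finite_set G
    & \bigcap_(A in G) A = set0].
  by apply: Poss; apply/seteqP; split=> // x Fx; apply: noF; exists x.
have [|B FB BG] := directed_bigcap_seq FB0 Fdir s; first by rewrite -Gs.
by have [x /BG] := Fneq0 B FB; rewrite -Gs G0.
Qed.

End Possibility.

Definition app1 {X : Type} (f : X -> X) (t : term X) : term X :=
  @TApp X 0 (fun a => f (a ord0)) (fun=> t).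
Definition rel1 {X : Type} (A : set X) (t : term X) : formula X :=
  @FRel X 0 (fun a => A (a ord0)) (fun=> t).

Section Transfer.
Context {X : Type} {S : topologicalType} {e : X -> S}.
Context {star : (X -> X) -> S -> S} {M : Lstruct X S}.
Hypothesis Mfun : forall (F : ('I_1 -> X) -> X) (s : S),
  Lfun M F (fun=> s) = star (fun x => F (fun=> x)) s.
Hypothesis Mrel : forall (R : set ('I_1 -> X)) (s : S),
  Lrel M R (fun=> s) <-> starset e (fun x => R (fun=> x)) s.
Hypothesis Mtran : forall sigma : formula X, sentence sigma ->
  holds (standard_struct X) sigma <-> holds M sigma.

Lemma Lfun1E (f : X -> X) s :
  Lfun M (fun a : 'I_1 -> X => f (a ord0)) (fun=> s) = star f s.
Proof. exact: Mfun. Qed.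

Lemma Lrel1E (A : set X) s :
  Lrel M (fun a : 'I_1 -> X => A (a ord0)) (fun=> s) = starset e A s.
Proof. exact/propext/Mrel. Qed.

Lemma starset_meet {A B C : set X} {s : S} : A `&` B `<=` C ->
  starset e A s -> starset e B s -> starset e C s.
Proof.
move=> ABC; pose x := TVar X 0.
pose sigma := FAll 0 (FImp (rel1 A x) (FImp (rel1 B x) (rel1 C x))).
have sigma_sent : sentence sigma by rewrite /sigma /rel1 /x => k /=; firstorder.
have /(Mtran _ sigma_sent)/(_ (fun=> s) s) : holds (standard_struct X) sigma.
  by move=> v y Ay By; apply: ABC.
by rewrite /upd /= !Lrel1E.
Qed.

Lemma starset_image {A B : set X} {f : X -> X} {s : S} : f @` A `<=` B ->
  starset e A s -> starset e B (star f s).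
Proof.
move=> fAB; pose x := TVar X 0.
pose sigma := FAll 0 (FImp (rel1 A x) (rel1 B (app1 f x))).
have sigma_sent : sentence sigma by rewrite /sigma /rel1 /app1 /x => k /=; firstorder.
have /(Mtran _ sigma_sent)/(_ (fun=> s) s) : holds (standard_struct X) sigma.
  by move=> v y Ay; apply: fAB; exists y.
by rewrite /upd /= !Lrel1E Lfun1E.
Qed.

Lemma starset_cover {A B : set X} : A `|` B = setT ->
  forall s, starset e A s \/ starset e B s.
Proof.
move=> ABT s; pose x := TVar X 0.
pose sigma := FAll 0 (FOr (rel1 A x) (rel1 B x)).
have sigma_sent : sentence sigma by rewrite /sigma /rel1 /x => k /=; firstorder.
have /(Mtran _ sigma_sent)/(_ (fun=> s) s) : holds (standard_struct X) sigma.
  by move=> v y /=; have : [set: X] y by []; rewrite -ABT.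
by rewrite /upd /= !Lrel1E.
Qed.

Lemma star_pair_inj {E : set X} {p q : X -> X} {s t : S} :
  (forall x y, E x -> E y -> p x = p y -> q x = q y -> x = y) ->
  starset e E s -> starset e E t -> star p s = star p t -> star q s = star q t ->
  s = t.
Proof.
move=> pqE; pose x := TVar X 0; pose y := TVar X 1.
pose sigma := FAll 0 (FAll 1 (FImp (rel1 E x) (FImp (rel1 E y)
  (FImp (FEq (app1 p x) (app1 p y)) (FImp (FEq (app1 q x) (app1 q y)) (FEq x y)))))).
have sigma_sent : sentence sigma.
  by rewrite /sigma /rel1 /app1 /x /y => k /=; firstorder; subst.
have /(Mtran _ sigma_sent)/(_ (fun=> s) s t) : holds (standard_struct X) sigma.
  by move=> v a b; apply: pqE.
by rewrite /upd /= !Lrel1E !Lfun1E.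
Qed.

Lemma starsetS {A B : set X} {s : S} : A `<=` B -> starset e A s -> starset e B s.
Proof. by move=> AB As; apply: (starset_meet _ As As) => x [/AB]. Qed.

Lemma starset_disj {A B : set X} {s : S} : A `&` B = set0 ->
  starset e A s -> starset e B s -> False.
Proof.
by move=> AB0 As Bs; apply: (starset_set0 e s); apply: starset_meet As Bs; rewrite AB0.
Qed.

Hypothesis Ind : principle_Ind e.

Lemma star_eq_of_image (p : X -> X) (z xi : S) :
  (forall A, starset e A xi -> exists2 Z, starset e Z z & p @` Z `<=` A) ->
  star p z = xi.
Proof.
move=> pushA; apply: contrapT => /Ind[A [pzA nxiA]].
have [//|Acxi] := starset_cover (setUv A) xi.
have [Z Zz pZAc] := pushA _ Acxi.
exact: starset_disj (setICr A) pzA (starset_image pZAc Zz).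
Qed.

Section Pairing.
Hypothesis Poss : principle_Poss e.
Context {h : nat * nat -> X} (h_inj : injective h).

Let dec := 'pinv_(fun=> (0, 0)%N) setT h.
Let diag n := h (n, n).
Let N := range diag.
Let p1 z := diag (dec z).1.
Let p2 z := diag (dec z).2.

Lemma decK : cancel h dec.
Proof. by move=> q; rewrite /dec pinvKV //; [exact: in2W | exact: in_setT]. Qed.

Lemma infinite_diag : infinite_set N.
Proof.
move=> /(finite_image (fun z => (dec z).1)) fin; apply: infinite_nat.
by apply: sub_finite_set fin => n _; exists (diag n); [exists n | rewrite decK].
Qed.

Lemma cofinite_point : exists xi, forall K, finite_set K -> starset e (N `\` K) xi.
Proof.
have [|||xi xiF] :=
  Poss_common_point Poss (B0 := N) (F := [set N `\` K | K in finite_set]).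
- by exists set0; rewrite ?setD0.
- move=> _ _ [K1 fK1 <-] [K2 fK2 <-]; exists (N `\` (K1 `|` K2)).
    by exists (K1 `|` K2); rewrite ?finite_setU.
  by rewrite setDUr.
- by move=> _ [K fK <-]; apply/infinite_setN0/infinite_setD => //; apply: infinite_diag.
by exists xi => K fK; apply: xiF; exists K.
Qed.

Definition pairs (r : rel nat) (A : set X) : set X :=
  h @` [set mn | r mn.1 mn.2 /\ A (diag mn.1) /\ A (diag mn.2)].

Lemma pairs_range r A : pairs r A `<=` range h.
Proof. by move=> _ [mn _ <-]; exists mn. Qed.

Lemma pairsI r A B : pairs r (A `&` B) `<=` pairs r A `&` pairs r B.
Proof. by move=> _ [mn [rmn [[Am Bm] [An Bn]]] <-]; split; exists mn. Qed.

Lemma p1_pairs r A : p1 @` pairs r A `<=` A.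
Proof. by move=> _ [_ [mn [_ [Am _]] <-] <-]; rewrite /p1 decK. Qed.

Lemma p2_pairs r A : p2 @` pairs r A `<=` A.
Proof. by move=> _ [_ [mn [_ [_ An]] <-] <-]; rewrite /p2 decK. Qed.

Section CofinitePoint.
Context {xi : S} (xi_cofinite : forall K, finite_set K -> starset e (N `\` K) xi).

Lemma starset_two_diag A : starset e A xi ->
  exists m n, [/\ m != n, A (diag m) & A (diag n)].
Proof.
move=> Axi.
have Nxi : starset e N xi by rewrite -(setD0 N); apply: xi_cofinite.
have [x [Am]] := starset_neq0 (starset_meet (C := A `&` N) (fun _ x => x) Axi Nxi).
rewrite /N => -[m _ mx]; subst x.
have ANm : starset e (A `&` (N `\` [set diag m])) xi.
  by apply: starset_meet Axi (xi_cofinite _ (finite_set1 (diag m))).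
have [y [An []]] := starset_neq0 ANm; rewrite /N => -[n _ ny] nm; subst y.
by exists m, n; split=> //; apply/eqP => mn; apply: nm; rewrite mn.
Qed.

Lemma starsetT : starset e setT xi.
Proof. exact: starsetS (subsetT _) (xi_cofinite _ (finite_set0 _)). Qed.

Section PairsPoint.
Context {r : rel nat} (r_total : forall m n, m != n -> r m n \/ r n m).

Lemma pairs_neq0 A : starset e A xi -> pairs r A !=set0.
Proof.
move=> /starset_two_diag[m [n [mn Am An]]].
have [rmn|rnm] := r_total _ _ mn.
  by exists (h (m, n)); exists (m, n).
by exists (h (n, m)); exists (n, m).
Qed.

Lemma pairs_point : exists z, forall A, starset e A xi -> starset e (pairs r A) z.
Proof.
have [|||z zF] := Poss_common_point Poss (B0 := pairs r setT)
  (F := [set pairs r A | A in [set A | starset e A xi]]).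
- by exists setT => //; apply: starsetT.
- move=> _ _ [A1 A1xi <-] [A2 A2xi <-]; exists (pairs r (A1 `&` A2)); last exact: pairsI.
  by exists (A1 `&` A2) => //; exact: starset_meet (fun _ x => x) A1xi A2xi.
- by move=> _ [A Axi <-]; apply: pairs_neq0.
by exists z => A Axi; apply: zF; exists A.
Qed.

Lemma star_proj_pairs_point {z : S} :
  (forall A, starset e A xi -> starset e (pairs r A) z) ->
  star p1 z = xi /\ star p2 z = xi.
Proof.
move=> zF; split; apply: star_eq_of_image => A /zF Az.
  by exists (pairs r A); last exact: p1_pairs.
by exists (pairs r A); last exact: p2_pairs.
Qed.

End PairsPoint.

End CofinitePoint.

Lemma diag_inj : injective diag.
Proof. by move=> m n /h_inj[]. Qed.

Lemma pairs_lt_gt_disj : pairs ltn setT `&` pairs [rel m n | n < m] setT = set0.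
Proof.
apply/seteqP; split=> // _ [[mn [lt_mn _] <-] [nm [lt_nm _] /h_inj nm_mn]].
by move: lt_nm; rewrite nm_mn /= ltnNge ltnW.
Qed.

Lemma Ind_Poss_Tran_inconsistent : False.
Proof.
have [xi xi_cof] := cofinite_point.
have lt_total m n : m != n -> m < n \/ n < m by rewrite neq_ltn => /orP.
have gt_total m n : m != n -> n < m \/ m < n by move=> /lt_total[]; [right | left].
have [z1 z1F] := pairs_point xi_cof lt_total.
have [z2 z2F] := pairs_point xi_cof (r := [rel m n | n < m]) gt_total.
have [p1z1 p2z1] := star_proj_pairs_point z1F.
have [p1z2 p2z2] := star_proj_pairs_point z2F.
have z1T := z1F _ (starsetT xi_cof); have z2T := z2F _ (starsetT xi_cof).
have z12 : z1 = z2.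
  apply: (star_pair_inj (p := p1) (q := p2) _
    (starsetS (pairs_range _ _) z1T) (starsetS (pairs_range _ _) z2T)).
  - move=> _ _ [[a b] _ <-] [[c d] _ <-].
    by rewrite /p1 /p2 !decK /= => /diag_inj-> /diag_inj->.
  - by rewrite p1z1 p1z2.
  - by rewrite p2z1 p2z2.
by apply: starset_disj pairs_lt_gt_disj z1T _; rewrite z12.
Qed.

End Pairing.

End Transfer.

Theorem corollary2p4 (X : Type) (Xinf : infinite_set [set: X])
    (S : topologicalType) (e : X -> S) (star : (X -> X) -> (S -> S)) :
  topological_extension e star ->
  ~ [/\ principle_Ind e, principle_Poss e & principle_Tran e star].
Proof.
move=> _ [Ind Poss [M [_ Mfun Mrel Mtran]]].
have [h h_inj] := infinite_countable_inj (T := (nat * nat)%type) Xinf.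
exact: (Ind_Poss_Tran_inconsistent Mfun Mrel Mtran Ind Poss h_inj).
Qed.
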